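(* Let $\psi_A\in(0,2\pi)\setminus\{\pi\}$, $\eta\neq0$, $\phi\in(0,\pi)$, and put $A=\tan\frac{\psi_A}{2}$, $h=\frac{\sinh\eta}{\sin\phi}$, $z=\eta+i\phi$. Let $$Q_{A_1}=\begin{pmatrix}\cos\frac{\psi_A}{2}-i\cosh z\,\sin\frac{\psi_A}{2}&i\sinh z\,\sin\frac{\psi_A}{2}\\-i\sinh z\,\sin\frac{\psi_A}{2}&\cos\frac{\psi_A}{2}+i\cosh z\,\sin\frac{\psi_A}{2}\end{pmatrix}.$$ Let $a,b,c,\mu,\chi\in\mathbb{R}$ with $c\neq0$, set $$M=\begin{pmatrix}a+ib&e^{-\mu}c\,e^{i\chi}\\-e^{\mu}c\,e^{-i\chi}&a-ib\end{pmatrix},\qquad P=Q_{A_1}^{-1}M,$$ and suppose $\overline{P_{11}}=P_{22}$. Then, with $m=\tanh\mu$ and provided $\overline{P_{21}}\neq0$ and $(A-h)m-h(hA+1)\neq0$, $$-\frac{P_{12}}{\overline{P_{21}}}=\frac{(A+h)m+h(hA-1)}{(A-h)m-h(hA+1)},$$ which in particular is independent of $a,b,c,\chi$. Equivalently, if this ratio equals $e^{2\mu'}$ with $\mu'\in\mathbb{R}$ and $m'=\tanh\mu'$, then $$mm'-\frac{h}{A}(m+m')-h^2=0.$$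
   Context: Matrices are $\mathrm{SL}(2,\mathbb{C})$ (or $\mathrm{GL}(2,\mathbb{C})$) representatives of Lorentz transformations; $P_{ij}$ denotes the $(i,j)$ entry and the bar denotes complex conjugation. Interpretation: $Q_{A_1}$ is the holonomy of an external semi-infinite defect (deficit angle $\psi_A$, at angle $\phi$ and relative rapidity $\eta$ to a stationary defect $B$ along the $z$-axis); $M$ is the holonomy of an intermediate defect ending on a junction moving with rapidity $\mu$ along the stationary defect $B_1$; the condition $\overline{P_{11}}=P_{22}$ expresses that the next intermediate defect ends on a subluminal junction on $B_2$, whose rapidity $\mu'$ is defined by $e^{2\mu'}=-P_{12}/\overline{P_{21}}$. *)

From Stdlib Require Export Reals.
Open Scope R_scope.

Record C := mkC { Re : R; Im : R }.

Definition RtoC (x : R) : C := mkC x 0.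
Definition Ci : C := mkC 0 1.
Definition Cadd (z w : C) : C := mkC (Re z + Re w) (Im z + Im w).
Definition Copp (z : C) : C := mkC (- Re z) (- Im z).
Definition Csub (z w : C) : C := Cadd z (Copp w).
Definition Cmul (z w : C) : C :=
  mkC (Re z * Re w - Im z * Im w) (Re z * Im w + Im z * Re w).
Definition Cconj (z : C) : C := mkC (Re z) (- Im z).
Definition Cinv (z : C) : C :=
  mkC (Re z / (Re z ^ 2 + Im z ^ 2)) (- Im z / (Re z ^ 2 + Im z ^ 2)).
Definition Cdiv (z w : C) : C := Cmul z (Cinv w).
Definition Cexp (z : C) : C := mkC (exp (Re z) * cos (Im z)) (exp (Re z) * sin (Im z)).
Definition Ccosh (z : C) : C :=
  Cmul (RtoC (1/2)) (Cadd (Cexp z) (Cexp (Copp z))).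
Definition Csinh (z : C) : C :=
  Cmul (RtoC (1/2)) (Csub (Cexp z) (Cexp (Copp z))).

Record M2 := mkM2 { e11 : C; e12 : C; e21 : C; e22 : C }.
Definition M2mul (X Y : M2) : M2 :=
  mkM2 (Cadd (Cmul (e11 X) (e11 Y)) (Cmul (e12 X) (e21 Y)))
       (Cadd (Cmul (e11 X) (e12 Y)) (Cmul (e12 X) (e22 Y)))
       (Cadd (Cmul (e21 X) (e11 Y)) (Cmul (e22 X) (e21 Y)))
       (Cadd (Cmul (e21 X) (e12 Y)) (Cmul (e22 X) (e22 Y))).
Definition M2det (X : M2) : C := Csub (Cmul (e11 X) (e22 X)) (Cmul (e12 X) (e21 X)).
Definition M2inv (X : M2) : M2 :=
  let d := Cinv (M2det X) in
  mkM2 (Cmul d (e22 X)) (Cmul d (Copp (e12 X)))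
       (Cmul d (Copp (e21 X))) (Cmul d (e11 X)).

Definition QA1 (psiA eta phi : R) : M2 :=
  let z := mkC eta phi in
  let co := RtoC (cos (psiA / 2)) in
  let s := RtoC (sin (psiA / 2)) in
  mkM2 (Csub co (Cmul Ci (Cmul (Ccosh z) s)))
       (Cmul Ci (Cmul (Csinh z) s))
       (Copp (Cmul Ci (Cmul (Csinh z) s)))
       (Cadd co (Cmul Ci (Cmul (Ccosh z) s))).

Definition Mint (a b c mu chi : R) : M2 :=
  mkM2 (mkC a b)
       (Cmul (RtoC (exp (- mu) * c)) (Cexp (mkC 0 chi)))
       (Copp (Cmul (RtoC (exp mu * c)) (Cexp (mkC 0 (- chi)))))
       (mkC a (- b)).

From Pilot Require Import Defs.
From Stdlib Require Import Reals Lra.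
Open Scope R_scope.

(* Write cs, sn = cos, sin (psiA/2); ch, sh = cosh, sinh eta;
   cf, sf = cos, sin phi; cm, sm = cosh, sinh mu; w = c e^{i chi}.  Since
   det Q_{A_1} = 1, its inverse is its adjugate, so every entry of
   P = Q_{A_1}^{-1} M is an explicit polynomial in these reals and in a, b, w.
   1. The condition conj P11 = P22 is linear in (a, b) and determines them:
        sh sf (a - i b) = - w (ch sf sm + i sh cf cm).
   2. Substituting, P12 = X w and conj P21 = Y w with X, Y REAL numbers
      independent of a, b, c, chi; with A = sn/cs, h = sh/sf, m = sm/cm and
      K = cs sf cm / sh they factor as X = - K N, Y = K D, where N and D are
      the numerator and denominator of the claimed ratio.  Hence
      - P12 / conj P21 = N / D.
   3. If N / D = e^{2 mu'} then, writing tanh mu' = (t - 1)/(t + 1) with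
      t = e^{2 mu'}, clearing denominators in N = t D yields the relation
      m m' - (h/A)(m + m') - h^2 = 0.
   The file proves elementary identities first, then steps 1-2 for arbitrary
   real parameters (Section ParametrizedProduct), then identifies Q_{A_1}^{-1}
   and M with the parametrized matrices, step 3, and finally the theorem. *)

Lemma cos_sin_sq (x : R) : cos x ^ 2 + sin x ^ 2 = 1.
Proof. pose proof (sin2_cos2 x) as H; unfold Rsqr in H; lra. Qed.

Lemma cosh_sinh_sq (x : R) : cosh x ^ 2 - sinh x ^ 2 = 1.
Proof. unfold cosh, sinh; rewrite exp_Ropp; field; apply Rgt_not_eq, exp_pos. Qed.

Lemma exp_cosh_sinh (x : R) : exp x = cosh x + sinh x /\ exp (- x) = cosh x - sinh x.
Proof. unfold cosh, sinh; split; field. Qed.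

Lemma tanh_exp2 (x : R) : tanh x = (exp (2 * x) - 1) / (exp (2 * x) + 1).
Proof.
  pose proof (exp_pos x) as Hx.
  replace (2 * x) with (x + x) by ring; rewrite exp_plus.
  unfold tanh, sinh, cosh; rewrite exp_Ropp.
  field; split; nra.
Qed.

Lemma cosh_pos (x : R) : 0 < cosh x.
Proof. unfold cosh; pose proof (exp_pos x); pose proof (exp_pos (- x)); lra. Qed.

Lemma sinh_neq0 (x : R) : x <> 0 -> sinh x <> 0.
Proof.
  unfold sinh; intros Hx H0; apply Hx.
  assert (Hexp : exp x = exp (- x)) by lra.
  apply exp_inv in Hexp; lra.
Qed.

Lemma half_angle_nondegenerate (psi : R) :
  0 < psi < 2 * PI -> psi <> PI -> 0 < sin (psi / 2) /\ cos (psi / 2) <> 0.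
Proof.
  intros Hpsi HpsiPI; pose proof PI_RGT_0.
  split; [apply sin_gt_0; lra|].
  destruct (Rtotal_order (psi / 2) (PI / 2)) as [Hl | [He | Hg]].
  - apply Rgt_not_eq, cos_gt_0; lra.
  - exfalso; apply HpsiPI; lra.
  - apply Rlt_not_eq, cos_lt_0; lra.
Qed.

Lemma Ccosh_mkC (x y : R) : Ccosh (mkC x y) = mkC (cosh x * cos y) (sinh x * sin y).
Proof.
  unfold Ccosh, Cexp, Cmul, Cadd, Copp, RtoC; cbn.
  rewrite cos_neg, sin_neg; unfold cosh, sinh; f_equal; field.
Qed.

Lemma Csinh_mkC (x y : R) : Csinh (mkC x y) = mkC (sinh x * cos y) (cosh x * sin y).
Proof.
  unfold Csinh, Csub, Cexp, Cmul, Cadd, Copp, RtoC; cbn.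
  rewrite cos_neg, sin_neg; unfold cosh, sinh; f_equal; field.
Qed.

Lemma M2inv_unimodular (X : M2) : M2det X = RtoC 1 ->
  M2inv X = mkM2 (e22 X) (Copp (e12 X)) (Copp (e21 X)) (e11 X).
Proof.
  intros H; unfold M2inv; rewrite H.
  destruct X as [[x1 y1] [x2 y2] [x3 y3] [x4 y4]].
  unfold Cinv, Cmul, Copp, RtoC; cbn [Re Im e11 e12 e21 e22].
  f_equal; f_equal; field.
Qed.

Lemma Cdiv_real_multiple (z u : Defs.C) (r : R) :
  u <> RtoC 0 -> Re z = - r * Re u -> Im z = - r * Im u ->
  Copp (Cdiv z u) = RtoC r.
Proof.
  destruct z as [x y], u as [x' y']; cbn [Re Im]; intros Hu Hx Hy.
  assert (Hnorm : x' ^ 2 + y' ^ 2 <> 0).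
  { intro H0; apply Hu.
    assert (x' = 0) by nra; assert (y' = 0) by nra; subst; reflexivity. }
  unfold Cdiv, Cmul, Cinv, Copp, RtoC; cbn [Re Im]; subst; f_equal; field; auto.
Qed.

(* Steps 1 and 2 for arbitrary real parameters: cs, sn stand for the half
   deficit angle, ch, sh, cf, sf for the rapidity eta and angle phi, cm, sm
   for the junction rapidity mu, and w = wr + i wi for c e^{i chi}. *)
Section ParametrizedProduct.

Variables cs sn ch sh cf sf cm sm : R.
Hypothesis circle_phi : cf ^ 2 + sf ^ 2 = 1.
Hypothesis hyperbola_eta : ch ^ 2 - sh ^ 2 = 1.
Hypothesis sn_neq0 : sn <> 0.
Hypothesis cs_neq0 : cs <> 0.
Hypothesis sh_neq0 : sh <> 0.
Hypothesis sf_neq0 : sf <> 0.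
Hypothesis cm_neq0 : cm <> 0.

Definition Qinv_explicit : M2 :=
  mkM2 (mkC (cs - sh * sf * sn) (ch * cf * sn)) (mkC (ch * sf * sn) (- (sh * cf * sn)))
       (mkC (- (ch * sf * sn)) (sh * cf * sn)) (mkC (cs + sh * sf * sn) (- (ch * cf * sn))).

Definition Mint_explicit (a b wr wi : R) : M2 :=
  mkM2 (mkC a b) (mkC ((cm - sm) * wr) ((cm - sm) * wi))
       (mkC (- ((cm + sm) * wr)) ((cm + sm) * wi)) (mkC a (- b)).

Definition P_explicit (a b wr wi : R) : M2 :=
  M2mul Qinv_explicit (Mint_explicit a b wr wi).

Lemma diag_condition_solve (a b wr wi : R) :
  Cconj (e11 (P_explicit a b wr wi)) = e22 (P_explicit a b wr wi) ->
  sh * sf * a = wi * sh * cf * cm - wr * ch * sf * sm /\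
  sh * sf * b = wr * sh * cf * cm + wi * ch * sf * sm.
Proof.
  intros H.
  pose proof (f_equal Re H) as Hre; pose proof (f_equal Im H) as Him.
  unfold P_explicit, Qinv_explicit, Mint_explicit, M2mul, Cconj, Cmul, Cadd in Hre, Him;
    cbn [Re Im e11 e12 e21 e22] in Hre, Him.
  split; apply (Rmult_eq_reg_l (2 * sn)); try lra; nra.
Qed.

Definition coef12 : R :=
  (cs - sh * sf * sn) * (cm - sm)
  - sn * (sh ^ 2 * cf ^ 2 * cm + ch ^ 2 * sf ^ 2 * sm) / (sh * sf).
Definition coef21 : R :=
  - (cs + sh * sf * sn) * (cm + sm)
  - sn * (sh ^ 2 * cf ^ 2 * cm - ch ^ 2 * sf ^ 2 * sm) / (sh * sf).

Lemma offdiag_entries (a b wr wi : R) :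
  sh * sf * a = wi * sh * cf * cm - wr * ch * sf * sm ->
  sh * sf * b = wr * sh * cf * cm + wi * ch * sf * sm ->
  let P := P_explicit a b wr wi in
  Re (e12 P) = coef12 * wr /\ Im (e12 P) = coef12 * wi /\
  Re (Cconj (e21 P)) = coef21 * wr /\ Im (Cconj (e21 P)) = coef21 * wi.
Proof.
  intros Ha Hb P.
  assert (Ea : a = (wi * sh * cf * cm - wr * ch * sf * sm) / (sh * sf))
    by (rewrite <- Ha; field; auto).
  assert (Eb : b = (wr * sh * cf * cm + wi * ch * sf * sm) / (sh * sf))
    by (rewrite <- Hb; field; auto).
  unfold P, P_explicit, Qinv_explicit, Mint_explicit, M2mul, Cconj, Cmul, Cadd, coef12, coef21;
    cbn [Re Im e11 e12 e21 e22].
  rewrite Ea, Eb; repeat split; field; auto.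
Qed.

Let A := sn / cs.
Let h := sh / sf.
Let m := sm / cm.
Let K := cs * sf * cm / sh.
Let N := (A + h) * m + h * (h * A - 1).
Let D := (A - h) * m - h * (h * A + 1).

Lemma coef12_factor : coef12 = - K * N.
Proof.
  unfold coef12, K, N, A, h, m.
  replace (cf ^ 2) with (1 - sf ^ 2) by lra; replace (ch ^ 2) with (1 + sh ^ 2) by lra.
  field; auto.
Qed.

Lemma coef21_factor : coef21 = K * D.
Proof.
  unfold coef21, K, D, A, h, m.
  replace (cf ^ 2) with (1 - sf ^ 2) by lra; replace (ch ^ 2) with (1 + sh ^ 2) by lra.
  field; auto.
Qed.

Lemma offdiag_ratio (a b wr wi : R) :
  let P := P_explicit a b wr wi in
  Cconj (e11 P) = e22 P -> Cconj (e21 P) <> RtoC 0 -> D <> 0 ->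
  Copp (Cdiv (e12 P) (Cconj (e21 P))) = RtoC (N / D).
Proof.
  intros P Hdiag Hnz HD; unfold P in *.
  destruct (diag_condition_solve a b wr wi Hdiag) as [Ha Hb].
  destruct (offdiag_entries a b wr wi Ha Hb) as (E12r & E12i & E21r & E21i).
  rewrite coef12_factor in E12r, E12i; rewrite coef21_factor in E21r, E21i.
  apply Cdiv_real_multiple; auto;
    [rewrite E12r, E21r | rewrite E12i, E21i]; field; auto.
Qed.

End ParametrizedProduct.

(* Q_{A_1}^{-1} is the parametrized matrix: det Q_{A_1} = 1, and the adjugate
   is read off from cosh z, sinh z in real coordinates. *)
Lemma QA1_inv (psiA eta phi : R) :
  M2inv (QA1 psiA eta phi) =
  Qinv_explicit (cos (psiA / 2)) (sin (psiA / 2)) (cosh eta) (sinh eta) (cos phi) (sin phi).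
Proof.
  assert (Hdet : M2det (QA1 psiA eta phi) = RtoC 1).
  { unfold M2det, QA1; rewrite Ccosh_mkC, Csinh_mkC.
    unfold Csub, Cadd, Copp, Cmul, Ci, RtoC; cbn [Re Im e11 e12 e21 e22]; f_equal.
    - transitivity (cos (psiA / 2) ^ 2 + sin (psiA / 2) ^ 2 *
        ((cosh eta ^ 2 - sinh eta ^ 2) * (cos phi ^ 2 + sin phi ^ 2))); [ring|].
      rewrite cosh_sinh_sq, cos_sin_sq, Rmult_1_l, Rmult_1_r; apply cos_sin_sq.
    - ring. }
  rewrite (M2inv_unimodular _ Hdet).
  unfold QA1, Qinv_explicit; rewrite Ccosh_mkC, Csinh_mkC.
  unfold Csub, Cadd, Copp, Cmul, Ci, RtoC; cbn [Re Im e11 e12 e21 e22].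
  f_equal; f_equal; ring.
Qed.

Lemma Mint_explicit_eq (a b c mu chi : R) :
  Mint a b c mu chi = Mint_explicit (cosh mu) (sinh mu) a b (c * cos chi) (c * sin chi).
Proof.
  destruct (exp_cosh_sinh mu) as [Ep Em].
  unfold Mint, Mint_explicit, Cmul, Copp, Cexp, RtoC; cbn.
  rewrite exp_0, cos_neg, sin_neg, Ep, Em; f_equal; f_equal; ring.
Qed.

Lemma rapidity_relation (A h m x : R) :
  A <> 0 -> (A - h) * m - h * (h * A + 1) <> 0 ->
  ((A + h) * m + h * (h * A - 1)) / ((A - h) * m - h * (h * A + 1)) = exp (2 * x) ->
  m * tanh x - h / A * (m + tanh x) - h ^ 2 = 0.
Proof.
  intros HA HD Hratio.
  pose proof (exp_pos (2 * x)) as Ht.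
  rewrite tanh_exp2; set (t := exp (2 * x)) in *.
  assert (HN : (A + h) * m + h * (h * A - 1) = t * ((A - h) * m - h * (h * A + 1)))
    by (rewrite <- Hratio; field; auto).
  transitivity (- ((A + h) * m + h * (h * A - 1) - t * ((A - h) * m - h * (h * A + 1)))
                / (A * (t + 1))).
  - field; split; auto; lra.
  - rewrite HN; field; split; auto; lra.
Qed.

Theorem mainTheorem8 (psiA eta phi a b c mu chi : R) :
  0 < psiA < 2 * PI -> psiA <> PI -> eta <> 0 -> 0 < phi < PI -> c <> 0 ->
  let A := tan (psiA / 2) in
  let h := sinh eta / sin phi in
  let m := tanh mu in
  let P := M2mul (M2inv (QA1 psiA eta phi)) (Mint a b c mu chi) in
  Cconj (e11 P) = e22 P ->
  Cconj (e21 P) <> RtoC 0 ->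
  (A - h) * m - h * (h * A + 1) <> 0 ->
  Copp (Cdiv (e12 P) (Cconj (e21 P)))
    = RtoC (((A + h) * m + h * (h * A - 1)) / ((A - h) * m - h * (h * A + 1)))
  /\ (forall mu' : R,
        Copp (Cdiv (e12 P) (Cconj (e21 P))) = RtoC (exp (2 * mu')) ->
        let m' := tanh mu' in
        m * m' - h / A * (m + m') - h ^ 2 = 0).
Proof.
  intros Hpsi HpsiPI Heta Hphi _ A h m P Hdiag Hnz HD.
  destruct (half_angle_nondegenerate psiA Hpsi HpsiPI) as [Hsn Hcs].
  assert (Hsf : sin phi <> 0) by (apply Rgt_not_eq, sin_gt_0; lra).
  assert (Hcm : cosh mu <> 0) by apply Rgt_not_eq, cosh_pos.
  assert (HP : P = P_explicit (cos (psiA / 2)) (sin (psiA / 2)) (cosh eta) (sinh eta)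
                     (cos phi) (sin phi) (cosh mu) (sinh mu) a b (c * cos chi) (c * sin chi))
    by (unfold P, P_explicit; rewrite QA1_inv, Mint_explicit_eq; reflexivity).
  assert (Hratio := offdiag_ratio (cos (psiA / 2)) (sin (psiA / 2)) (cosh eta) (sinh eta)
                      (cos phi) (sin phi) (cosh mu) (sinh mu) (cos_sin_sq phi)
                      (cosh_sinh_sq eta) (Rgt_not_eq _ _ Hsn) Hcs (sinh_neq0 eta Heta) Hsf Hcm
                      a b (c * cos chi) (c * sin chi)).
  cbv zeta in Hratio; rewrite <- HP in Hratio.
  specialize (Hratio Hdiag Hnz HD).
  split; [exact Hratio|].
  intros mu' Hmu'; rewrite Hratio in Hmu'; apply (f_equal Re) in Hmu'; cbn in Hmu'.
  apply rapidity_relation; auto.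
  unfold A, tan; apply Rmult_integral_contrapositive; split; [lra|].
  apply Rinv_neq_0_compat; exact Hcs.
Qed.
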